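(* Let $X,Y$ be random variables on a probability space $(\Omega,\mathcal F,\mathbb P)$ such that $X$, $Y$ and $XY$ are integrable. Then: (i) If $X$ and $Y$ are independent, then $\{\mathbb P_A\times\mathbb P_B: A,B\in\sigma^+(X)\}\subseteq\mathcal P_{X,Y}$ and $\{\mathbb P_A\times\mathbb P_B: A,B\in\sigma^+(Y)\}\subseteq\mathcal P_{X,Y}$. (ii) If $\{\mathbb P_A\times\mathbb P_B: A,B\in\sigma^+(X)\}\subseteq\mathcal P_{X,Y}$, then for all $A,B\in\sigma^+(X)$, $\mathbb E[XY\mid A]+\mathbb E[XY\mid B]-\mathbb E[X\mid A]\mathbb E[Y\mid B]-\mathbb E[Y\mid A]\mathbb E[X\mid B]\ge0$; in particular (taking $A=B$) $\mathbb E[XY\mid A]\ge \mathbb E[X\mid A]\mathbb E[Y\mid A]$ for every $A\in\sigma^+(X)$.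
   Context: $\sigma^+(Z)=\{A\in\sigma(Z):\mathbb P(A)>0\}$, where $\sigma(Z)$ is the $\sigma$-field generated by $Z$; $\mathbb P_A=\mathbb P(\cdot\mid A)$ and $\mathbb E[\cdot\mid A]$ is expectation under $\mathbb P_A$. $\mathcal P_{X,Y}$ is the set of all product probability measures $\pi_1\times\pi_2$ on $(\Omega^2,\mathcal F\otimes\mathcal F)$ such that $\iint_{\Omega^2}(X(\omega)-X(\omega'))(Y(\omega)-Y(\omega'))\,\pi_1(\mathrm d\omega)\pi_2(\mathrm d\omega')\ge0$. *)

From HB Require Import structures.
From mathcomp Require Import all_boot all_order all_algebra.
From mathcomp Require Import all_classical all_reals all_analysis.
Set Implicit Arguments. Unset Strict Implicit. Unset Printing Implicit Defensive.
Import Order.TTheory GRing.Theory Num.Theory.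
Local Open Scope classical_set_scope.
Local Open Scope ring_scope.

Definition sigma_rv d (T : measurableType d) (R : realType) (Z : T -> R)
  (A : set T) : Prop :=
  exists B : set R, measurable B /\ A = Z @^-1` B.

Definition sigma_pos d (T : measurableType d) (R : realType)
  (P : probability T R) (Z : T -> R) (A : set T) : Prop :=
  sigma_rv Z A /\ (0 < P A)%E.

Definition condprob d (T : measurableType d) (R : realType)
  (P : probability T R) (A : set T) : set T -> \bar R :=
  fun C => (P (C `&` A) / P A)%E.

Definition condE d (T : measurableType d) (R : realType)
  (P : probability T R) (A : set T) (f : T -> R) : \bar R :=
  (\int[condprob P A]_w (f w)%:E)%E.

Definition indep_rv d (T : measurableType d) (R : realType)
  (P : probability T R) (X Y : T -> R) : Prop :=
  forall B C : set R, measurable B -> measurable C ->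
    P (X @^-1` B `&` Y @^-1` C) = (P (X @^-1` B) * P (Y @^-1` C))%E.

Definition in_PXY d (T : measurableType d) (R : realType)
  (X Y : T -> R) (pi1 pi2 : set T -> \bar R) : Prop :=
  (0 <= \int[(pi1 \x pi2)%E]_z
          ((X z.1 - X z.2) * (Y z.1 - Y z.2))%:E)%E.

From HB Require Import structures.
From mathcomp Require Import all_boot all_order all_algebra.
From mathcomp Require Import all_classical all_reals all_analysis.
From mathcomp Require Import measurable_realfun ring lra.
Import Order.TTheory GRing.Theory Num.Theory.
Set Implicit Arguments. Unset Strict Implicit. Unset Printing Implicit Defensive.
Local Open Scope classical_set_scope.
Local Open Scope ring_scope.
Local Open Scope ereal_scope.

(* Expanding the product and integrating term by term (Fubini) gives, for
   A, B of positive probability,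
     \int (X w - X w') (Y w - Y w') d(P_A x P_B)(w, w')
       = E[XY|A] + E[XY|B] - E[X|A] E[Y|B] - E[Y|A] E[X|B],
   which is (ii); for A = B the right-hand side is 2 (E[XY|A] - E[X|A] E[Y|A]).
   For (i), conditioning on an event of sigma(X) keeps X and Y independent and
   does not change the law of Y, so E[XY|A] = E[X|A] E[Y] and E[Y|A] = E[Y]:
   the right-hand side vanishes.  The case of sigma(Y) follows by symmetry. *)

Section integrable_normalize.
Context d (T : measurableType d) (R : realType).

Lemma ge0_le_integral_mrestr (mu : {measure set T -> \bar R}) (D : set T)
    (mD : measurable D) (f : T -> \bar R) :
  measurable_fun [set: T] f -> (forall x, 0 <= f x) ->
  \int[mrestr mu mD]_x f x <= \int[mu]_x f x.
Proof.
move=> mf f0.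
have -> : \int[mu]_x f x =
    \int[measure_add (mrestr mu mD) (mrestr mu (measurableC mD))]_x f x.
  apply: eq_measure_integral => C mC _.
  apply: esym; apply: eq_trans (measure_addE _ _ C) _.
  by rewrite /mrestr [RHS](measureDI mu mC mD) setDE addeC.
by rewrite ge0_integral_measure_add// leeDl// integral_ge0.
Qed.

Lemma integrable_mrestr (mu : {measure set T -> \bar R}) (D : set T)
    (mD : measurable D) (f : T -> \bar R) :
  mu.-integrable setT f -> (mrestr mu mD).-integrable setT f.
Proof.
move=> /integrableP[mf fi]; apply/integrableP; split => //.
apply: le_lt_trans fi; apply: ge0_le_integral_mrestr => //.
exact: measurableT_comp.
Qed.

Lemma integrable_mnormalize (mu : {measure set T -> \bar R}) (P : probability T R)
    (f : T -> \bar R) :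
  mu.-integrable setT f -> P.-integrable setT f ->
  (mnormalize mu P).-integrable setT f.
Proof.
rewrite /mnormalize; case: ifPn => // _ /integrableP[mf fi] _.
apply/integrableP; split => //.
have k0 : (0 <= (fine (mu setT))^-1)%R by rewrite invr_ge0 fine_ge0.
have -> : (fun U => mu U * (fine (mu setT))^-1%:E) = mscale (NngNum k0) mu.
  by apply/funext => U; rewrite /mscale muleC.
rewrite ge0_integral_mscale//; last exact: measurableT_comp.
by rewrite lte_mul_pinfty.
Qed.

End integrable_normalize.

(* Gives [condprob P A] the probability structure of [mnormalize]. *)
Lemma condprobE d (T : measurableType d) (R : realType) (P : probability T R)
    (A : set T) (mA : measurable A) :
  0 < P A -> condprob P A = mnormalize (mrestr P mA) P.
Proof.
move=> PA0; have PAfin : P A \is a fin_num by rewrite fin_num_measure.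
apply/funext => C; rewrite /condprob /mnormalize /= /mrestr setTI.
rewrite ifF; last first.
  by rewrite gt_eqF//=; move: PAfin; rewrite fin_numE => /andP[_ /negbTE].
by rewrite -[in P A](fineK PAfin) inver ifF// -eqe fineK// gt_eqF.
Qed.

Lemma integrable_mnormalize_mrestr d (T : measurableType d) (R : realType)
    (P : probability T R) (A : set T) (mA : measurable A) (f : T -> \bar R) :
  P.-integrable setT f -> (mnormalize (mrestr P mA) P).-integrable setT f.
Proof. by move=> iPf; apply: integrable_mnormalize => //; exact: integrable_mrestr. Qed.

Section product_integral.
Context d1 d2 (T1 : measurableType d1) (T2 : measurableType d2) (R : realType).
Variables (m1 : {sigma_finite_measure set T1 -> \bar R})
  (m2 : {sigma_finite_measure set T2 -> \bar R}).
Variables (f : T1 -> R) (g : T2 -> R).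
Hypotheses (if1 : m1.-integrable setT (EFin \o f))
  (ig2 : m2.-integrable setT (EFin \o g)).

Lemma integrable_prod_mul :
  (m1 \x m2).-integrable setT (fun z => (f z.1 * g z.2)%:E).
Proof.
have mf : measurable_fun setT f by apply/measurable_EFinP; exact: measurable_int if1.
have mg : measurable_fun setT g by apply/measurable_EFinP; exact: measurable_int ig2.
apply/integrable12ltyP.
  apply/measurable_EFinP; apply: measurable_funM.
    exact: measurableT_comp mf measurable_fst.
  exact: measurableT_comp mg measurable_snd.
have /integrableP[_ ifoo] := if1; have /integrableP[_ igoo] := ig2.
under eq_integral => x _.
  under eq_integral => y _ do rewrite /= normrM EFinM.
  rewrite ge0_integralZl//; last by apply/measurable_EFinP; exact: measurableT_comp.
  over.
rewrite /= ge0_integralZr//; last exact: integral_ge0.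
  by rewrite lte_mul_pinfty// ?integral_ge0// ge0_fin_numE// integral_ge0.
by apply/measurable_EFinP; exact: measurableT_comp.
Qed.

Lemma integral_prod_mul :
  \int[m1 \x m2]_z (f z.1 * g z.2)%:E =
  \int[m1]_x (f x)%:E * \int[m2]_y (g y)%:E.
Proof.
rewrite -(integral12_prod_meas1 integrable_prod_mul) /fubini_F /=.
have gfin : \int[m2]_y (g y)%:E \is a fin_num by exact: integrable_fin_num ig2.
under eq_integral => x _.
  under eq_integral => y _ do rewrite EFinM.
  rewrite (integralZl measurableT ig2 (f x)) -(fineK gfin) -EFinM mulrC EFinM.
  over.
by rewrite (integralZl measurableT if1) fineK// muleC.
Qed.

End product_integral.

Section prod_increments.
Context d (T : measurableType d) (R : realType) (m1 m2 : probability T R).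
Variables (X Y : T -> R).
Hypotheses (iX1 : m1.-integrable setT (EFin \o X))
  (iY1 : m1.-integrable setT (EFin \o Y))
  (iXY1 : m1.-integrable setT (fun w => (X w * Y w)%:E))
  (iX2 : m2.-integrable setT (EFin \o X))
  (iY2 : m2.-integrable setT (EFin \o Y))
  (iXY2 : m2.-integrable setT (fun w => (X w * Y w)%:E)).

Lemma integral_prod_increments :
  \int[m1 \x m2]_z ((X z.1 - X z.2) * (Y z.1 - Y z.2))%:E =
  \int[m1]_w (X w * Y w)%:E + \int[m2]_w (X w * Y w)%:E
  - \int[m1]_w (X w)%:E * \int[m2]_w (Y w)%:E
  - \int[m1]_w (Y w)%:E * \int[m2]_w (X w)%:E.
Proof.
pose XY w := (X w * Y w)%R; pose one := @cst T R 1%R.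
have i1 (m : probability T R) : m.-integrable setT (EFin \o one).
  exact: finite_measure_integrable_cst.
have int1 (m : probability T R) : \int[m]_w (one w)%:E = 1.
  by rewrite (integral_cst m measurableT 1) mul1e; exact: probability_setT.
pose F1 z := (XY z.1 * one z.2)%:E; pose F2 z := (one z.1 * XY z.2)%:E.
pose F3 z := (X z.1 * Y z.2)%:E; pose F4 z := (Y z.1 * X z.2)%:E.
have iF1 : (m1 \x m2).-integrable setT F1 := integrable_prod_mul iXY1 (i1 m2).
have iF2 : (m1 \x m2).-integrable setT F2 := integrable_prod_mul (i1 m1) iXY2.
have iF3 : (m1 \x m2).-integrable setT F3 := integrable_prod_mul iX1 iY2.
have iF4 : (m1 \x m2).-integrable setT F4 := integrable_prod_mul iY1 iX2.
rewrite (eq_integral ((F1 \+ F2) \- F3 \- F4)); last first.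
  by move=> z _; rewrite /F1 /F2 /F3 /F4 /XY /one /= -!EFinD; congr EFin; ring.
rewrite integralB//; last by apply: integrableB => //; exact: integrableD.
rewrite integralB//; last exact: integrableD.
rewrite integralD// (integral_prod_mul iXY1 (i1 m2)) (integral_prod_mul (i1 m1) iXY2).
rewrite (integral_prod_mul iX1 iY2) (integral_prod_mul iY1 iX2).
by rewrite (int1 m1) (int1 m2) mule1 mul1e.
Qed.

End prod_increments.

Definition pair_fun d d1 d2 (T : measurableType d) (T1 : measurableType d1)
    (T2 : measurableType d2) (X : {mfun T >-> T1}) (Y : {mfun T >-> T2}) :=
  fun w => (X w, Y w).

Section pair_fun_measurable.
Context d d1 d2 (T : measurableType d) (T1 : measurableType d1)
  (T2 : measurableType d2) (X : {mfun T >-> T1}) (Y : {mfun T >-> T2}).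

Let measurable_pair_fun : measurable_fun setT (pair_fun X Y).
Proof. exact: measurable_fun_pair. Qed.

HB.instance Definition _ :=
  isMeasurableFun.Build _ _ _ _ (pair_fun X Y) measurable_pair_fun.

End pair_fun_measurable.

Section independence.
Context d (T : measurableType d) (R : realType).

Lemma indep_rvC (P : probability T R) (X Y : T -> R) :
  indep_rv P X Y -> indep_rv P Y X.
Proof. by move=> XY B C mB mC; rewrite setIC XY// muleC. Qed.

Lemma integral_distribution_id (Q : probability T R) (X : {mfun T >-> R}) :
  Q.-integrable setT (EFin \o X) ->
  \int[distribution Q X]_x x%:E = \int[Q]_w (X w)%:E.
Proof.
by move=> iX; rewrite (integral_distribution (f := EFin)) //; exact/measurable_EFinP.
Qed.

Lemma integrable_distribution_id (Q : probability T R) (X : {mfun T >-> R}) :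
  Q.-integrable setT (EFin \o X) ->
  (distribution Q X).-integrable setT EFin.
Proof.
by move=> iX; apply: integrable_pushforward => //; exact/measurable_EFinP.
Qed.

Lemma integral_eq_law (Q1 Q2 : probability T R) (X : {mfun T >-> R}) :
  (forall C, measurable C -> Q1 (X @^-1` C) = Q2 (X @^-1` C)) ->
  Q1.-integrable setT (EFin \o X) -> Q2.-integrable setT (EFin \o X) ->
  \int[Q1]_w (X w)%:E = \int[Q2]_w (X w)%:E.
Proof.
move=> Q12 iX1 iX2.
rewrite -(integral_distribution_id iX1) -(integral_distribution_id iX2).
by apply: eq_measure_integral => C mC _; exact: Q12.
Qed.

(* Independence makes the law of [pair_fun X Y] the product of the laws of [X]
   and [Y], so the integral splits by Fubini. *)
Lemma integral_indep_mul (Q : probability T R) (X Y : {mfun T >-> R}) :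
  indep_rv Q X Y ->
  Q.-integrable setT (EFin \o X) -> Q.-integrable setT (EFin \o Y) ->
  Q.-integrable setT (fun w => (X w * Y w)%:E) ->
  \int[Q]_w (X w * Y w)%:E = \int[Q]_w (X w)%:E * \int[Q]_w (Y w)%:E.
Proof.
move=> XY iX iY iXY.
have mmul : measurable_fun setT (fun z : R * R => (z.1 * z.2)%:E).
  apply/measurable_EFinP.
  by apply: measurable_funM; [exact: measurable_fst|exact: measurable_snd].
transitivity (\int[distribution Q (pair_fun X Y)]_z (z.1 * z.2)%:E).
  by rewrite (integral_distribution (f := fun z : R * R => (z.1 * z.2)%:E)).
rewrite (eq_measure_integral (distribution Q X \x distribution Q Y)); last first.
  move=> S mS _; apply/esym; apply: product_measure_unique mS => B C mB mC.
  exact: XY.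
rewrite (integral_prod_mul (f := id) (g := id)); last 2 first.
- exact: integrable_distribution_id.
- exact: integrable_distribution_id.
by rewrite !integral_distribution_id.
Qed.

End independence.

Section condition_on_preimage.
Context d (T : measurableType d) (R : realType) (P : probability T R).
Variables (X Y : {mfun T >-> R}) (B0 : set R).
Hypotheses (XY : indep_rv P X Y) (mB0 : measurable B0)
  (PA0 : 0 < P (X @^-1` B0)).

Let mA : measurable (X @^-1` B0) := measurable_funPTI X mB0.

Lemma condprob_preimage_indep C : measurable C ->
  condprob P (X @^-1` B0) (Y @^-1` C) = P (Y @^-1` C).
Proof.
move=> mC; rewrite /condprob setIC XY// muleAC divee ?mul1e ?gt_eqF//.
exact: fin_num_measure.
Qed.

Lemma indep_rv_condprob : indep_rv (mnormalize (mrestr P mA) P) X Y.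
Proof.
move=> B C mB mC; rewrite /= -(condprobE mA PA0) condprob_preimage_indep//.
rewrite /condprob setIAC -preimage_setI XY//; last exact: measurableI.
by rewrite -preimage_setI muleAC.
Qed.

Hypotheses (iX : P.-integrable setT (EFin \o X))
  (iY : P.-integrable setT (EFin \o Y))
  (iXY : P.-integrable setT (fun w => (X w * Y w)%:E)).

Lemma condE_preimage_indep : condE P (X @^-1` B0) Y = \int[P]_w (Y w)%:E.
Proof.
rewrite /condE (condprobE mA PA0); apply: integral_eq_law => //.
  by move=> C mC; rewrite -condprob_preimage_indep// (condprobE mA PA0).
exact: integrable_mnormalize_mrestr.
Qed.

Lemma condE_mul_preimage_indep :
  condE P (X @^-1` B0) (fun w => X w * Y w)%R =
  condE P (X @^-1` B0) X * \int[P]_w (Y w)%:E.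
Proof.
rewrite -condE_preimage_indep /condE (condprobE mA PA0).
apply: integral_indep_mul indep_rv_condprob _ _ _;
  exact: integrable_mnormalize_mrestr.
Qed.

End condition_on_preimage.

Lemma condE_fin_num d (T : measurableType d) (R : realType)
    (P : probability T R) (A : set T) (f : T -> R) : measurable A -> 0 < P A ->
  P.-integrable setT (EFin \o f) -> condE P A f \is a fin_num.
Proof.
move=> mA PA0 iPf; rewrite /condE (condprobE mA PA0).
exact/integrable_fin_num/integrable_mnormalize_mrestr.
Qed.

Section increments_under_conditioning.
Context d (T : measurableType d) (R : realType) (P : probability T R).
Variables (X Y : T -> R).
Hypotheses (iX : P.-integrable setT (EFin \o X))
  (iY : P.-integrable setT (EFin \o Y))
  (iXY : P.-integrable setT (fun w => (X w * Y w)%:E)).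

Lemma integral_condprob_increments (A B : set T) :
  measurable A -> 0 < P A -> measurable B -> 0 < P B ->
  \int[condprob P A \x condprob P B]_z ((X z.1 - X z.2) * (Y z.1 - Y z.2))%:E =
  condE P A (fun w => X w * Y w)%R + condE P B (fun w => X w * Y w)%R
  - condE P A X * condE P B Y - condE P A Y * condE P B X.
Proof.
move=> mA PA0 mB PB0; rewrite /condE (condprobE mA PA0) (condprobE mB PB0).
by apply: integral_prod_increments; exact: integrable_mnormalize_mrestr.
Qed.

End increments_under_conditioning.

Lemma measurable_sigma_pos d (T : measurableType d) (R : realType)
    (P : probability T R) (X : {mfun T >-> R}) (A : set T) :
  sigma_pos P X A -> measurable A.
Proof. by move=> [[B [mB ->]] _]; exact: measurable_funPTI. Qed.

Lemma in_PXYC d (T : measurableType d) (R : realType) (X Y : T -> R)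
    (pi1 pi2 : set T -> \bar R) :
  in_PXY X Y pi1 pi2 = in_PXY Y X pi1 pi2.
Proof.
by rewrite /in_PXY; congr (0 <= integral _ _ _); apply/funext => z; rewrite mulrC.
Qed.

Lemma in_PXY_sigma_pos_indep d (T : measurableType d) (R : realType)
    (P : probability T R) (X Y : {mfun T >-> R}) (A B : set T) :
  P.-integrable setT (EFin \o X) -> P.-integrable setT (EFin \o Y) ->
  P.-integrable setT (fun w => (X w * Y w)%:E) ->
  indep_rv P X Y -> sigma_pos P X A -> sigma_pos P X B ->
  in_PXY X Y (condprob P A) (condprob P B).
Proof.
move=> iX iY iXY XY [[BA [mBA ->]] PA0] [[BB [mBB ->]] PB0].
have mA := measurable_funPTI X mBA; have mB := measurable_funPTI X mBB.
rewrite /in_PXY integral_condprob_increments//.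
rewrite !(condE_mul_preimage_indep XY)// !(condE_preimage_indep XY)//.
rewrite -(fineK (condE_fin_num mA PA0 iX)) -(fineK (condE_fin_num mB PB0 iX)).
rewrite -(fineK (integrable_fin_num measurableT iY)).
by rewrite -!EFinM -!EFinN -!EFinD lee_fin; lra.
Qed.

Lemma le_mul_of_ge0_double_gap (R : realType) (x y z : \bar R) :
  x \is a fin_num -> y \is a fin_num -> z \is a fin_num ->
  0 <= z + z - x * y - y * x -> x * y <= z.
Proof.
move: x y z => [x| |] [y| |] [z| |]//= _ _ _.
by rewrite -?EFinM -?EFinN -?EFinD !lee_fin; lra.
Qed.

Local Close Scope ereal_scope.

Theorem proposition4p2 (d : measure_display) (T : measurableType d)
  (R : realType) (P : probability T R) (X Y : {RV P >-> R})
  (iX : P.-integrable setT (fun w => (X w)%:E))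
  (iY : P.-integrable setT (fun w => (Y w)%:E))
  (iXY : P.-integrable setT (fun w => (X w * Y w)%:E)) :
  (indep_rv P X Y ->
     (forall A B, sigma_pos P X A -> sigma_pos P X B ->
        in_PXY X Y (condprob P A) (condprob P B)) /\
     (forall A B, sigma_pos P Y A -> sigma_pos P Y B ->
        in_PXY X Y (condprob P A) (condprob P B))) /\
  ((forall A B, sigma_pos P X A -> sigma_pos P X B ->
       in_PXY X Y (condprob P A) (condprob P B)) ->
     (forall A B, sigma_pos P X A -> sigma_pos P X B ->
        (0 <= condE P A (fun w => (X w * Y w)%R) + condE P B (fun w => (X w * Y w)%R)
              - condE P A X * condE P B Y - condE P A Y * condE P B X)%E) /\
     (forall A, sigma_pos P X A ->
        (condE P A X * condE P A Y <= condE P A (fun w => (X w * Y w)%R))%E)).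
Proof.
split=> [XY|PXY].
  split=> A B hA hB; first exact: in_PXY_sigma_pos_indep.
  rewrite in_PXYC; apply: in_PXY_sigma_pos_indep (indep_rvC XY) hA hB => //.
  by apply: eq_integrable measurableT _ _ _ iXY => w _; rewrite mulrC.
have gap_ge0 A B : sigma_pos P X A -> sigma_pos P X B ->
    (0 <= condE P A (fun w => X w * Y w)%R + condE P B (fun w => X w * Y w)%R
          - condE P A X * condE P B Y - condE P A Y * condE P B X)%E.
  move=> hA hB; have := PXY A B hA hB.
  have [mA mB] := (measurable_sigma_pos hA, measurable_sigma_pos hB).
  by case: hA hB => _ PA0 [_ PB0]; rewrite /in_PXY integral_condprob_increments.
split=> // A hA; have [mA PA0] := (measurable_sigma_pos hA, hA.2).
by apply: le_mul_of_ge0_double_gap (gap_ge0 A A hA hA); exact: condE_fin_num.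
Qed.
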